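(* Let $G = K_m \otimes K_n$ with $m \geq 3$ and $n \geq 2m-1$. Then $\dim(G) = n-1$.
   Context: $K_r$ is the complete graph on $r$ vertices. The tensor product $G\otimes H$ has vertex set $V(G)\times V(H)$, with $(u,v)$ adjacent to $(x,y)$ iff $ux\in E(G)$ and $vy\in E(H)$. For a connected graph and an ordered set $W=\{w_1,\dots,w_k\}$ of vertices, $r(v\mid W)=(d(v,w_1),\dots,d(v,w_k))$; $W$ is resolving if distinct vertices have distinct representations; $\dim(G)$ is the minimum size of a resolving set. *)

(* finite simple graphs as symmetric irreflexive relations. *)
From mathcomp Require Import all_boot.
Set Implicit Arguments. Unset Strict Implicit. Unset Printing Implicit Defensive.

Definition complete_graph (r : nat) : rel 'I_r := fun x y => x != y.
Arguments complete_graph r : clear implicits.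

Definition tensor_graph (T1 T2 : finType) (e1 : rel T1) (e2 : rel T2)
  : rel (T1 * T2)%type := fun p q => e1 p.1 q.1 && e2 p.2 q.2.

Fixpoint walk (T : finType) (e : rel T) (k : nat) (a b : T) : bool :=
  match k with
  | 0 => a == b
  | k'.+1 => (a == b) || [exists c, e a c && walk e k' c b]
  end.

(* Graph distance: least k with a walk of length <= k (shortest paths in a
   connected graph have length < #|T|, so searching 0 .. #|T|-1 suffices). *)
Definition dist (T : finType) (e : rel T) (a b : T) : nat :=
  find (fun k => walk e k a b) (iota 0 #|T|).

Definition resolving (T : finType) (e : rel T) (W : {set T}) : bool :=
  [forall x, forall y, [forall w in W, dist e x w == dist e y w] ==> (x == y)].

Definition metric_dim (T : finType) (e : rel T) : nat :=
  \big[minn/#|T|]_(W : {set T} | resolving e W) #|W|.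

(** In [K_m (x) K_n] with [m, n >= 3] two vertices are at distance 1 when
    they differ in both coordinates and at distance 2 when they share exactly
    one, so a vertex [w] only sees whether [x = w] and whether [x] lies on
    the row or column of [w].  Two vertices of one row in columns avoided by
    a set [W] look the same to [W], so a resolving set meets all columns but
    one: [dim >= n - 1].  Conversely, when [n - 1 >= 2(m - 1)],
    placing two vertices of [W] in each of the first [m - 1] rows while using
    each of the first [n - 1] columns once gives a resolving set of size
    [n - 1]. *)
From HB Require Import structures.
From mathcomp Require Import all_boot zify.

Set Implicit Arguments.
Unset Strict Implicit.
Unset Printing Implicit Defensive.

HB.instance Definition _ := SemiGroup.isComLaw.Build nat minn minnA minnC.

Lemma metric_dim_le (T : finType) (e : rel T) (W : {set T}) :
  resolving e W -> metric_dim e <= #|W|.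
Proof. by move=> resW; rewrite /metric_dim (bigD1 W) //= geq_minl. Qed.

Lemma metric_dim_ge (T : finType) (e : rel T) (k : nat) :
  k <= #|T| -> (forall W, resolving e W -> k <= #|W|) -> k <= metric_dim e.
Proof.
move=> kT resk; rewrite /metric_dim; elim/big_ind: _ => // a b ka kb.
by rewrite leq_min ka kb.
Qed.

Lemma dist_diam2 (T : finType) (e : rel T) (a b : T) :
  2 < #|T| -> (a != b -> ~~ e a b -> exists c, e a c && e c b) ->
  dist e a b = if a == b then 0 else if e a b then 1 else 2.
Proof.
rewrite /dist; case: #|T| => [|[|[|N]]] // _ /= common.
have walk1 : [exists c, e a c && (c == b)] = e a b.
  apply/existsP/idP => [[c /andP[eac /eqP <-]] //|eab].
  by exists b; rewrite eab eqxx.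
case: eqP => [//|/eqP neab] /=; rewrite walk1.
case: (boolP (e a b)) => [//|neab'] /=.
have [c /andP[eac ecb]] := common neab neab'.
suff -> : [exists c, e a c && ((c == b) || [exists d, e c d && (d == b)])] by [].
apply/existsP; exists c; rewrite eac; apply/orP; right.
by apply/existsP; exists b; rewrite ecb eqxx.
Qed.

Lemma card_gt2_avoid (T : finType) (a b : T) :
  2 < #|T| -> exists c, (c != a) && (c != b).
Proof.
move=> T3; have : 0 < #|~: [set a; b]|.
  by move: (cardsCs [set a; b]) (leq_b1 (a != b)); rewrite cards2; lia.
by case/card_gt0P => c; rewrite !inE negb_or; exists c.
Qed.

Section Grid.
Variables T1 T2 : finType.
Implicit Types (x y w : T1 * T2) (W : {set T1 * T2}).

Definition same_line x y := (x.1 == y.1) || (x.2 == y.2).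

Definition same_trace W x y :=
  forall w, w \in W -> (x == w) = (y == w) /\ same_line x w = same_line y w.

Definition line_resolving W := forall x y, same_trace W x y -> x = y.

Lemma same_traceC W x y : same_trace W x y -> same_trace W y x.
Proof. by move=> tr w /tr [-> ->]. Qed.

Lemma same_trace_row W x y j1 j2 :
  (x.1, j1) \in W -> (x.1, j2) \in W -> j1 != j2 ->
  same_trace W x y -> x.1 = y.1.
Proof.
move=> w1 w2 nej tr; apply/eqP; apply: contraNT nej => nex.
have on_col j : (x.1, j) \in W -> y.2 == j.
  case/tr => _; rewrite /same_line /= eqxx (eq_sym y.1) (negbTE nex) /=.
  by move/esym.
by rewrite -(eqP (on_col _ w1)) on_col.
Qed.

Lemma same_trace_col W x y i :
  x.1 = y.1 -> (i, x.2) \in W -> same_trace W x y -> x.2 = y.2.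
Proof.
case: x y => [x1 x2] [y1 y2] /= <- wW tr; apply/eqP; apply: contraT => ne.
have [] := tr _ wW; rewrite /same_line !xpair_eqE /= eqxx (eq_sym y2) (negbTE ne).
by rewrite orbT andbT andbF orbF => ->.
Qed.

Lemma line_resolving_cover W (r0 : T1) (c0 : T2) :
  (forall i, i != r0 ->
     exists j1 j2, [/\ (i, j1) \in W, (i, j2) \in W & j1 != j2]) ->
  (forall j, j != c0 -> exists i, (i, j) \in W) ->
  line_resolving W.
Proof.
move=> rows cols x y tr.
have rowxy : x.1 = y.1.
  wlog x1r0 : x y tr / x.1 != r0.
    move=> gen; case: (eqVneq x.1 r0) => [x1r0|]; last exact: gen.
    case: (eqVneq y.1 r0) => [y1r0|y1r0]; first by rewrite x1r0 y1r0.
    exact/esym/gen/y1r0/same_traceC.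
  have [j1 [j2 [w1 w2 nej]]] := rows _ x1r0.
  exact: same_trace_row w1 w2 nej tr.
have colxy : x.2 = y.2.
  wlog x2c0 : x y tr rowxy / x.2 != c0.
    move=> gen; case: (eqVneq x.2 c0) => [x2c0|]; last exact: gen.
    case: (eqVneq y.2 c0) => [y2c0|y2c0]; first by rewrite x2c0 y2c0.
    exact/esym/gen/y2c0/esym/rowxy/same_traceC.
  have [i wW] := cols _ x2c0.
  exact: same_trace_col rowxy wW tr.
by case: x y tr rowxy colxy => ? ? [? ?] /= _ -> ->.
Qed.

Lemma line_resolving_card W :
  0 < #|T1| -> line_resolving W -> #|T2|.-1 <= #|W|.
Proof.
case/card_gt0P => x0 _ resW; rewrite leqNgt; apply/negP => smallW.
pose C := [set w.2 | w in W].
have CW : #|C| <= #|W| := leq_imset_card _ _.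
have : 1 < #|~: C| by move: (cardsC C); lia.
case/card_gt1P => j1 [j2 []]; rewrite !inE => j1C j2C nej.
suff /pair_equal_spec[_ /eqP] : (x0, j1) = (x0, j2) by rewrite (negbTE nej).
apply: resW => -[w1 w2] wW.
have wC : w2 \in C by exact: (imset_f _ wW).
have w2j j : j \notin C -> (j == w2) = false.
  by move=> jC; apply/negbTE; apply: contraNneq jC => ->.
by rewrite /same_line !xpair_eqE /= !w2j.
Qed.

End Grid.

Section TensorComplete.
Variables m n : nat.
Hypotheses (m3 : 2 < m) (n3 : 2 < n).
Let e := tensor_graph (complete_graph m) (complete_graph n).
Implicit Types (x y w : 'I_m * 'I_n) (W : {set 'I_m * 'I_n}).

Lemma dist_tensor_complete x w :
  dist e x w = if x == w then 0 else if same_line x w then 2 else 1.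
Proof.
have adj : e x w = ~~ same_line x w by rewrite /same_line negb_or.
rewrite dist_diam2 ?adj; first by case: (same_line x w).
  by rewrite card_prod !card_ord; nia.
move=> _ _.
have [k /andP[kx kw]] : exists k, (k != x.1) && (k != w.1).
  by apply: card_gt2_avoid; rewrite card_ord.
have [l /andP[lx lw]] : exists l, (l != x.2) && (l != w.2).
  by apply: card_gt2_avoid; rewrite card_ord.
exists (k, l); rewrite /e /tensor_graph /complete_graph /=.
by rewrite (eq_sym x.1) (eq_sym x.2) kx kw lx lw.
Qed.

Lemma eq_dist_tensor_complete x y w :
  (dist e x w == dist e y w) =
  ((x == w) == (y == w)) && (same_line x w == same_line y w).
Proof.
have same_line_refl : same_line w w by rewrite /same_line eqxx.
rewrite !dist_tensor_complete.
case: (eqVneq x w) => [->|_]; case: (eqVneq y w) => [->|_];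
  rewrite ?same_line_refl;
  by case: (same_line x w); case: (same_line y w).
Qed.

Lemma resolving_tensor_complete W : resolving e W <-> line_resolving W.
Proof.
split=> [/forallP resW x y tr | resW].
  apply/eqP; move/forallP: (resW x) => /(_ y) /implyP; apply.
  apply/forall_inP => w /tr [exw slw].
  by rewrite eq_dist_tensor_complete exw slw !eqxx.
apply/forallP => x; apply/forallP => y; apply/implyP => /forall_inP tr.
by apply/eqP/resW => w /tr; rewrite eq_dist_tensor_complete => /andP[/eqP ? /eqP ?].
Qed.

End TensorComplete.

Section Staircase.
Variables p q : nat.
Hypothesis pq : 2 * p <= q.

Definition stair_row (j : 'I_q.+1) : 'I_p.+1 := inord (minn (j %/ 2) p).

Definition staircase : {set 'I_p.+1 * 'I_q.+1} :=
  [set (stair_row j, j) | j in [set~ ord_max]].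

Lemma card_staircase : #|staircase| <= q.
Proof.
move: (leq_imset_card (fun j => (stair_row j, j)) [set~ ord_max]).
by rewrite cardsC1 card_ord.
Qed.

Lemma staircase_line_resolving : line_resolving staircase.
Proof.
apply: (line_resolving_cover (r0 := ord_max) (c0 := ord_max)).
  move=> i /eqP nir0; have ip : i < p.
    move: (ltn_ord i); rewrite ltnS leq_eqVlt => /predU1P[ie|//].
    by case: nir0; apply: val_inj.
  have stair_col k : k < 2 -> (i, inord (2 * i + k)) \in staircase.
    move=> k2; apply/imsetP; exists (inord (2 * i + k)).
      by rewrite !inE -val_eqE /= inordK; lia.
    by congr pair; apply: val_inj; rewrite /= !inordK; lia.
  exists (inord (2 * i)), (inord (2 * i + 1)); split.
  - by rewrite -[2 * i]addn0 stair_col.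
  - exact: stair_col.
  - by rewrite -val_eqE /= !inordK; lia.
by move=> j jc; exists (stair_row j); apply: imset_f; rewrite !inE.
Qed.

End Staircase.

Theorem proposition3p3 (m n : nat) :
  3 <= m -> 2 * m - 1 <= n ->
  metric_dim (tensor_graph (complete_graph m) (complete_graph n)) = n - 1.
Proof.
case: m => [//|p] m3; case: n => [|q] n_ge; first lia.
have pq : 2 * p <= q by lia.
have n3 : 2 < q.+1 by lia.
rewrite subn1 /=; apply/eqP; rewrite eqn_leq; apply/andP; split.
  apply: leq_trans (card_staircase p q); apply: metric_dim_le.
  exact/(resolving_tensor_complete m3 n3)/staircase_line_resolving.
apply: metric_dim_ge => [|W /(resolving_tensor_complete m3 n3) resW].
  by rewrite card_prod !card_ord; nia.
have card_W : #|'I_q.+1|.-1 <= #|W|.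
  by apply: line_resolving_card resW; rewrite card_ord.
by rewrite card_ord in card_W.
Qed.
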